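(* Let $G$ be a finite simple graph with a perfect matching $M$ and let $\mathcal{C}$ be an optimal edge $2$-colouring of $G$; write $\mathrm{mcl}(u)$ for the colour of the edge of $M$ at vertex $u$. Let $F$ be a forest of rooted trees which is a subgraph of $G\setminus M$, with set of roots $R$ and set of leaves $L$, each tree equipped with a depth-first ordering, and let $\preceq$ be the induced partial order on $V(F)$ (see context). Suppose that for each $u\in R\cup L$, every edge of $F$ incident with $u$ has colour $\mathrm{mcl}(u)$. Then there exists a set $P=\{(u_i,v_i): i=1,\ldots,|L|\}$ of pairs of vertices of $F$ satisfying: (a) for $i\ne j$, $u_i\ne u_j$; (b) $u_i\prec v_i$ for all $1\le i\le |L|$; in particular the path $u_iFv_i$ exists; (c) $\mathrm{mcl}(u_i)=\mathrm{mcl}(v_i)$ for all $i$; (d) the path $u_iFv_i$ is monochromatic with all edges coloured $\mathrm{mcl}(u_i)$, for all $i$; (e) for every internal vertex $z$ of $u_iFv_i$, $\mathrm{mcl}(z)\ne\mathrm{mcl}(u_i)$, for all $i$; (f) for $i\ne j$ with $u_iv_i\in M$ and $u_jv_j\in M$, the paths $u_iFv_i$ and $u_jFv_j$ do not share an internal vertex.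
   Context: $G\setminus M$ is the spanning subgraph of $G$ with edge set $E(G)\setminus M$. An edge $2$-colouring assigns colours to edges (not necessarily properly) so that every vertex sees at most $2$ distinct colours on its incident edges; optimal means it uses the maximum number of colours. In a rooted tree, leaves are the non-root vertices with no children; $R$ and $L$ are the unions over the trees of $F$ of their roots and leaves. For a rooted tree $T$ with a depth-first indexing $\mathrm{dfs}_T$ (descendants receive larger indices than their ancestors), the order $\preceq_T$ is $u\preceq_T v$ iff $\mathrm{dfs}_T(u)\ge \mathrm{dfs}_T(v)$. The partial order $\preceq$ on $V(F)$ restricts to $\preceq_T$ on each component tree $T$, and vertices in different trees are incomparable; $u\prec v$ means $u\preceq v$, $u\ne v$. $xFy$ denotes the unique $x$–$y$ path in $F$ (when $x,y$ lie in the same tree); its internal vertices are those other than $x,y$. *)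

From mathcomp Require Import all_boot.
Set Implicit Arguments. Unset Strict Implicit. Unset Printing Implicit Defensive.

Section GraphDefs.
Variable T : finType.

Definition simple_graph (adj : rel T) := symmetric adj /\ irreflexive adj.

Definition edges (adj : rel T) : {set {set T}} :=
  [set s | [exists x, exists y, adj x y && (s == [set x; y])]].

Definition perfect_matching (adj : rel T) (M : {set {set T}}) :=
  M \subset edges adj /\ forall x : T, #|[set m in M | x \in m]| = 1.

Definition seen_colours (adj : rel T) (c : {set T} -> nat) (x : T) : seq nat :=
  undup [seq c m | m in [set m in edges adj | x \in m]].

Definition edge_2_colouring (adj : rel T) (c : {set T} -> nat) :=
  forall x : T, size (seen_colours adj c x) <= 2.

Definition ncolours (adj : rel T) (c : {set T} -> nat) : nat :=
  size (undup [seq c m | m in edges adj]).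

Definition optimal_2_colouring (adj : rel T) (c : {set T} -> nat) :=
  edge_2_colouring adj c /\
  forall c' : {set T} -> nat, edge_2_colouring adj c' -> ncolours adj c' <= ncolours adj c.

Definition mcl (M : {set {set T}}) (c : {set T} -> nat) (x : T) : nat :=
  c (odflt set0 [pick m in M | x \in m]).

(* Rooted forest F given by vertex set VF and parent map par (None = root). *)
Definition prel (par : T -> option T) : rel T := fun x y => par x == Some y.

Definition anc (par : T -> option T) (a v : T) : bool := connect (prel par) v a.

Definition same_tree (par : T -> option T) (u v : T) : bool :=
  [exists r, anc par r u && anc par r v].

Definition rooted_forest (adj : rel T) (M : {set {set T}}) (VF : {set T})
    (par : T -> option T) :=
  [/\ forall x, x \notin VF -> par x = None,
      forall x y, par x = Some y -> [/\ y \in VF, adj x y & [set x; y] \notin M] &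
      forall x y, prel par x y -> ~~ connect (prel par) y x].

Definition forest_roots (VF : {set T}) (par : T -> option T) : {set T} :=
  [set x in VF | par x == None].

Definition forest_leaves (VF : {set T}) (par : T -> option T) : {set T} :=
  [set x in VF | (par x != None) && [forall w, par w != Some x]].

Definition desc (par : T -> option T) (v : T) : {set T} := [set w | anc par v w].

(* dfs is a depth-first (preorder) indexing of every tree of F: injective on
   each tree, and the descendants of v are exactly the vertices of its tree
   whose index lies in [dfs v, dfs v + #descendants). *)
Definition dfs_indexing (VF : {set T}) (par : T -> option T) (dfs : T -> nat) :=
  forall v w, v \in VF -> w \in VF -> same_tree par v w ->
    (dfs v = dfs w -> v = w) /\
    anc par v w = (dfs v <= dfs w < dfs v + #|desc par v|).

Definition preceq (VF : {set T}) (par : T -> option T) (dfs : T -> nat) (u v : T) :=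
  [&& u \in VF, v \in VF, same_tree par u v & dfs v <= dfs u].

Definition prec (VF : {set T}) (par : T -> option T) (dfs : T -> nat) (u v : T) :=
  preceq VF par dfs u v && (u != v).

Definition fadj (par : T -> option T) : rel T :=
  fun x y => prel par x y || prel par y x.

(* p is (the tail of) a simple path u = x0, x1, ..., xk = v in F *)
Definition forest_path (par : T -> option T) (u v : T) (p : seq T) : bool :=
  [&& path (fadj par) u p, uniq (u :: p) & last u p == v].

Definition monochromatic_path (c : {set T} -> nat) (col : nat) (u : T) (p : seq T) : bool :=
  path (fun x y => c [set x; y] == col) u p.

Definition internal (v : T) (p : seq T) (z : T) : bool := (z \in p) && (z != v).

End GraphDefs.

From mathcomp Require Import all_boot zify.
Set Implicit Arguments. Unset Strict Implicit. Unset Printing Implicit Defensive.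

(* Call t a start if the edge from t to its parent has colour mcl t; by
   hypothesis every leaf is a start.  A start t of colour k climbs the forest
   as long as it is the dfs-least k-candidate below the current vertex x, a
   k-candidate being a vertex whose path up to x is k-coloured and has no inner
   vertex of matching colour k.  Where the climb stops, t is paired with x if
   mcl x = k, and otherwise with the least k-candidate below x, unless this is
   t itself.  In that case x is a start but not a leaf: it is no root, and its
   parent edge has colour mcl x since x sees at most two colours and t could
   not climb past x.  As x sees the colour k, k and then t are determined by x,
   so the blocked starts inject into the non-leaf starts and at least |L|
   starts get partners.  The same count of colours shows that an inner vertex
   of the path of a pair determines the element of the pair it belongs to,
   whence the disjointness of the paths of matching pairs. *)


Section RootedForest.
Variables (T : finType) (par : T -> option T) (c : {set T} -> nat).
Hypothesis par_acyclic : forall x y, prel par x y -> ~~ anc par x y.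

Local Notation anc := (anc par).

Definition sanc a t := anc a t && (a != t).

Definition chain x t : {set T} := [set w | sanc x w && anc w t].

Definition child : rel T := fun a b => prel par b a.

(* At a root y this is the junk value c [set y]. *)
Definition pcol y := c [set y; odflt y (par y)].

Lemma anc_refl a : anc a a.
Proof. exact: connect0. Qed.

Lemma anc_trans a b d : anc a b -> anc b d -> anc a d.
Proof. by move=> ab bd; apply: connect_trans bd ab. Qed.

Lemma anc_parent x y : par x = Some y -> anc y x.
Proof. by move=> xy; apply: connect1; rewrite /prel xy. Qed.

Lemma ancP a x : anc a x -> a = x \/ exists2 y, par x = Some y & anc a y.
Proof.
case/connectP => [[|y q]] /=; first by move=> _ ->; left.
by case/andP=> /eqP xy yq ->; right; exists y => //; apply/connectP; exists q.
Qed.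

Lemma anc_total a b t : anc a t -> anc b t -> anc a b \/ anc b a.
Proof.
case/connectP=> p + -> /connectP[q + ->].
elim: p t q => [|y p IH] t [|z q] /=.
- by left; apply: anc_refl.
- by move=> _ tq; right; apply/connectP; exists (z :: q) => //=; rewrite tq.
- by move=> tp _; left; apply/connectP; exists (y :: p) => //=; rewrite tp.
case/andP=> /eqP ty tp /andP[/eqP tz tq]; move: ty; rewrite tz => -[ezy]; subst z; exact: IH tp tq.
Qed.

Lemma anc_antisym a b : anc a b -> anc b a -> a = b.
Proof.
case/ancP=> [//|[y ay ab]] ba.
by have := par_acyclic (introT eqP ay); rewrite (anc_trans ba ab).
Qed.

Lemma parent_neq x y : par x = Some y -> y != x.
Proof.
by move=> xy; apply: contraNneq (par_acyclic (introT eqP xy)) => ->; apply: anc_refl.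
Qed.

Lemma sanc_parent a x : sanc a x -> exists2 y, par x = Some y & anc a y.
Proof. by case/andP=> /ancP[-> | //]; rewrite eqxx. Qed.

Lemma sanc_child x t : sanc x t -> exists2 y, par y = Some x & anc y t.
Proof.
case/andP=> /connectP[p]; case/lastP: p => [|q y] /=; first by move=> _ ->; rewrite eqxx.
rewrite rcons_path last_rcons => /andP[tq /eqP yx] -> _.
by exists (last t q) => //; apply/connectP; exists q.
Qed.

Lemma chain_id t : chain t t = set0.
Proof.
apply/setP=> w; rewrite !inE; apply/negP=> /andP[/andP[tw tnw] wt].
by rewrite (anc_antisym tw wt) eqxx in tnw.
Qed.

Lemma chain_parent x y t : par x = Some y -> anc x t -> chain y t = x |: chain x t.
Proof.
move=> xy xt; have yx := anc_parent xy; apply/setP=> w; rewrite !inE /sanc.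
apply/idP/idP => [/andP[/andP[yw ynw] wt] | ].
  case: (anc_total xt wt) => [xw | wx].
    by case: (eqVneq w x) => [// | _]; rewrite xw wt.
  case/ancP: wx => [-> | [y' + wy']]; first by rewrite eqxx.
  rewrite xy => -[eyy']; rewrite -eyy' in wy'.
  by rewrite (anc_antisym yw wy') eqxx in ynw.
case/orP=> [/eqP -> | /andP[/andP[xw xnw] wt]]; first by rewrite yx xt parent_neq.
rewrite wt (anc_trans yx xw) andbT; apply: contra_neq xnw => ey.
by rewrite -ey in xw *; apply: anc_antisym.
Qed.

Lemma chain_cat x w t : w \in chain x t -> chain x t = chain x w :|: chain w t.
Proof.
rewrite inE /sanc => /andP[/andP[xw xnw] wt]; apply/setP=> u; rewrite !inE /sanc.
apply/idP/idP => [/andP[/andP[xu xnu] ut] | /orP[/andP[xu uw] | /andP[/andP[wu wnu] ut]]].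
- case: (anc_total ut wt) => [uw | wu]; first by rewrite xu xnu uw.
  by case: (eqVneq w u) => [<- | wnu]; rewrite ?xw ?xnw ?anc_refl ?wu ?wnu ?ut ?orbT.
- by rewrite xu (anc_trans uw wt).
rewrite ut (anc_trans xw wu) andbT; apply: contra_neq xnw => exu.
by rewrite -exu in wu; apply: anc_antisym.
Qed.

Lemma sanc_trans a b d : sanc a b -> sanc b d -> sanc a d.
Proof.
case/andP=> ab anb /andP[bd bnd]; rewrite /sanc (anc_trans ab bd).
by apply: contra_neq anb => ad; rewrite -ad in bd; apply: anc_antisym.
Qed.

Lemma chain_inner_sub x w t : w \in chain x t :\ t -> chain x w \subset chain x t :\ t.
Proof.
case/setD1P=> wnt xwt; rewrite (chain_cat xwt); apply/subsetP=> u uxw.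
rewrite !in_setD1 in_setU uxw andbT; move: uxw xwt; rewrite !inE => /andP[_ uw] /andP[_ wt].
by apply: contraNneq wnt => ut; rewrite ut in uw; rewrite (anc_antisym wt uw).
Qed.

Lemma forest_path_split u p : path (fadj par) u p -> uniq (u :: p) ->
  exists p1 p2, [/\ p = p1 ++ p2, path (prel par) u p1 & path child (last u p1) p2].
Proof.
have down y p' w : prel par y w -> path (fadj par) y p' -> uniq (w :: y :: p') ->
    path child y p'.
  elim: p' w y => [//|z p' IH] w y yw /= /andP[/orP[yz | zy] yp'] wyp'.
    move: yw yz wyp'; rewrite /prel => /eqP -> /eqP[->].
    by rewrite /= !inE eqxx !orbT.
  by rewrite /= {1}/child zy (IH y) //; case/andP: wyp'.
elim: p u => [|y p IH] u /=; first by exists [::], [::].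
case/andP=> /orP[uy | yu] up uyp.
  have [p1 [p2 [-> up1 up2]]] := IH y up (andP uyp).2.
  by exists (y :: p1), p2; rewrite /= uy.
by exists [::], (y :: p); rewrite /= {1}/child yu (down y p u).
Qed.

Lemma prel_path_mem u p w : path (prel par) u p -> w \in u :: p ->
  anc w u /\ anc (last u p) w.
Proof.
elim: p u w => [|y p IH] u w /=.
  by move=> _; rewrite inE => /eqP ->; split; apply: anc_refl.
case/andP=> /eqP uy yp; rewrite inE => /orP[/eqP -> | wp].
  by split; [apply: anc_refl | apply: anc_trans (IH y y yp (mem_head _ _)).2 (anc_parent uy)].
by have [wy lw] := IH y w yp wp; split=> //; apply: anc_trans wy (anc_parent uy).
Qed.

Lemma child_path_mem u p w : path child u p -> w \in u :: p ->
  anc u w /\ anc w (last u p).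
Proof.
elim: p u w => [|y p IH] u w /=.
  by move=> _; rewrite inE => /eqP ->; split; apply: anc_refl.
case/andP=> /eqP yu yp; rewrite inE => /orP[/eqP -> | wp].
  by split; [apply: anc_refl | apply: anc_trans (anc_parent yu) (IH y y yp (mem_head _ _)).2].
by have [yw wl] := IH y w yp wp; split=> //; apply: anc_trans (anc_parent yu) yw.
Qed.

Lemma prel_path_complete u p a : path (prel par) u p ->
  anc a u -> anc (last u p) a -> a \in u :: p.
Proof.
elim: p u => [|y p IH] u /=.
  by move=> _ au ua; rewrite (anc_antisym au ua) mem_head.
case/andP=> /eqP uy yp /ancP[-> _ | [y' + ay']]; first exact: mem_head.
by rewrite uy => -[ey] la; subst y'; rewrite inE (IH y yp ay' la) orbT.
Qed.

Lemma child_path_complete u p a : path child u p ->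
  anc a (last u p) -> anc u a -> a \in u :: p.
Proof.
elim: p u => [|y p IH] u /=.
  by move=> _ au ua; rewrite (anc_antisym au ua) mem_head.
case/andP=> /eqP yu yp al ua; have yl := (child_path_mem yp (mem_head _ _)).2.
case: (anc_total al yl) => [ay | ya]; last by rewrite inE (IH y yp al ya) orbT.
case/ancP: ay => [-> | [y' + ay']]; first by rewrite !inE eqxx orbT.
by rewrite yu => -[eu]; subst y'; rewrite (anc_antisym ay' ua) mem_head.
Qed.

(* The disjointness says that x is the lowest common ancestor of t and v. *)
Lemma forest_path_lca t v x p : forest_path par t v p ->
  anc x t -> anc x v -> [disjoint chain x t & chain x v] ->
  exists p1 p2, [/\ p = p1 ++ p2, path (prel par) t p1, last t p1 = x,
                     path child x p2 & last x p2 = v].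
Proof.
case/and3P=> tp tpu /eqP tpv xt xv dis.
have [p1 [p2 [ep up dn]]] := forest_path_split tp tpu.
suff top : last t p1 = x by exists p1, p2; rewrite -top -tpv ep last_cat; split.
have lv : last (last t p1) p2 = v by rewrite -tpv ep last_cat.
have lt := (prel_path_mem up (mem_last t p1)).1.
have lv' : anc (last t p1) v by rewrite -lv; apply: (child_path_mem dn (mem_head _ _)).2.
case: (eqVneq (last t p1) x) => // nlx; exfalso.
case: (anc_total lt xt) => [lx | xl].
  have x1 : x \in t :: p1 by apply: prel_path_complete.
  have : x \in last t p1 :: p2 by apply: child_path_complete; rewrite ?lv.
  rewrite inE eq_sym (negbTE nlx) /= => x2.
  by move: tpu; rewrite ep -cat_cons cat_uniq => /and3P[_ /hasPn/(_ x x2)]; rewrite x1.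
have inx w : anc (last t p1) w -> last t p1 \in chain x w.
  by move=> lw; rewrite inE /sanc xl eq_sym nlx lw.
by move: (inx v lv'); rewrite (disjointFr dis (inx t lt)).
Qed.

Lemma prel_path_colour k t p : path (prel par) t p ->
  {in chain (last t p) t, forall w, pcol w = k} -> monochromatic_path c k t p.
Proof.
elim: p t => [//|y p IH] t /= /andP[/eqP ty yp] colk.
have ly := (prel_path_mem yp (mem_last y p)).1.
have lt := anc_trans ly (anc_parent ty).
apply/andP; split.
  have -> : c [set t; y] = pcol t by rewrite /pcol ty.
  rewrite colk // inE /sanc lt anc_refl andbT.
  by apply: contraNneq (par_acyclic (introT eqP ty)) => <-.
apply: IH yp _ => w; rewrite inE => /andP[lw wy]; apply: colk.
by rewrite inE lw (anc_trans wy (anc_parent ty)).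
Qed.

Lemma child_path_colour k u p : path child u p ->
  {in chain u (last u p), forall w, pcol w = k} -> monochromatic_path c k u p.
Proof.
elim: p u => [//|y p IH] u /= /andP[/eqP yu yp] colk.
have yl := (child_path_mem yp (mem_head y p)).2.
apply/andP; split.
  have -> : c [set u; y] = pcol y by rewrite /pcol yu setUC.
  by rewrite colk // inE /sanc anc_parent // parent_neq.
apply: IH yp _ => w; rewrite inE => /andP[/andP[yw ynw] wl]; apply: colk.
rewrite inE /sanc (anc_trans (anc_parent yu) yw) wl andbT.
by apply: contra_neq ynw => uw; rewrite uw in yu; apply: anc_antisym (anc_parent yu).
Qed.

Lemma lca_path_colour t v x k p : forest_path par t v p ->
  anc x t -> anc x v -> [disjoint chain x t & chain x v] ->
  {in chain x t :|: chain x v, forall w, pcol w = k} -> monochromatic_path c k t p.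
Proof.
move=> tvp xt xv dis colk; have [p1 [p2 [-> up ux dn xp2]]] := forest_path_lca tvp xt xv dis.
rewrite /monochromatic_path cat_path ux; apply/andP; split.
  by apply: prel_path_colour up _ => w; rewrite ux => wc; apply: colk; rewrite inE wc.
by apply: child_path_colour dn _ => w; rewrite xp2 => wc; apply: colk; rewrite inE wc orbT.
Qed.

Lemma lca_path_internal t v x p z : forest_path par t v p ->
  anc x t -> anc x v -> [disjoint chain x t & chain x v] -> internal v p z ->
  [\/ z = x, z \in chain x t :\ t | z \in chain x v :\ v].
Proof.
move=> /[dup] tvp /and3P[_ /andP[tnp _] _] xt xv dis /andP[zp znv].
have [p1 [p2 [ep up ux dn xp2]]] := forest_path_lca tvp xt xv dis.
case: (eqVneq z x) => [-> | znx]; [by constructor 1 | rewrite !in_setD1 !inE /sanc].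
have znt : z != t by apply: contraNneq tnp => <-.
move: zp; rewrite ep mem_cat => /orP[zp1 | zp2].
  have [zt xz] := prel_path_mem up (@mem_behead _ (t :: p1) z zp1); rewrite ux in xz.
  by constructor 2; rewrite znt xz eq_sym znx zt.
have [xz zv] := child_path_mem dn (@mem_behead _ (x :: p2) z zp2); rewrite xp2 in zv.
by constructor 3; rewrite znv xz eq_sym znx zv.
Qed.

End RootedForest.

Section Colours.
Variables (T : finType) (adj : rel T) (M : {set {set T}}) (c : {set T} -> nat).
Hypothesis matchingM : perfect_matching adj M.
Hypothesis colouring : edge_2_colouring adj c.

Local Notation mc := (mcl M c).

Definition seen x k := exists2 e, e \in edges adj & (x \in e) && (c e == k).

Lemma seen_edge x y : adj x y -> seen x (c [set x; y]) /\ seen y (c [set x; y]).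
Proof.
move=> xy; have E : [set x; y] \in edges adj.
  by rewrite inE; apply/existsP; exists x; apply/existsP; exists y; rewrite xy eqxx.
by split; exists [set x; y]; rewrite // !inE !eqxx ?orbT.
Qed.

Lemma seen_mcl x : seen x (mc x).
Proof.
case: matchingM => /subsetP Medges Mx; rewrite /mcl; case: pickP => [m /andP[mM xm] | noM].
  by exists m; rewrite ?Medges ?xm ?eqxx.
by move: (Mx x); rewrite (eq_card0 (A := [set m in M | x \in m])) // => m; rewrite inE noM.
Qed.

Lemma seen_eq_off_mcl x (a b : nat) : seen x a -> seen x b -> a != mc x -> b != mc x -> a = b.
Proof.
have seen_mem k : seen x k -> k \in seen_colours adj c x.
  case=> e E /andP[xe /eqP <-]; rewrite mem_undup; apply: map_f.
  by rewrite mem_enum inE E xe.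
move=> /seen_mem sa /seen_mem sb anm bnm; apply/eqP; apply: contraT => anb.
have sm := seen_mem _ (seen_mcl x).
have : uniq [:: a; b; mc x] by rewrite /= !inE negb_or anb anm bnm.
move/uniq_leq_size/(_ _)/leq_trans/(_ (colouring x)); apply.
by move=> k; rewrite !inE => /or3P[] /eqP ->.
Qed.

Lemma matching_mate_uniq a b b' : [set a; b] \in M -> [set a; b'] \in M -> b != a -> b = b'.
Proof.
case: matchingM => _ /(_ a)/eqP/cards1P[m Ma] ab ab' bna.
have /set1P ebm : [set a; b] \in [set m] by rewrite -Ma inE ab set21.
have /set1P eb'm : [set a; b'] \in [set m] by rewrite -Ma inE ab' set21.
by have := set22 a b; rewrite ebm -eb'm !inE (negbTE bna) => /eqP.
Qed.

End Colours.

Section DepthFirst.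
Variables (T : finType) (adj : rel T) (M : {set {set T}}) (VF : {set T})
  (par : T -> option T) (dfs : T -> nat).
Hypothesis matchingM : perfect_matching adj M.
Hypothesis forestF : rooted_forest adj M VF par.
Hypothesis dfsF : dfs_indexing VF par dfs.

Local Notation anc := (anc par).
Local Notation prec := (prec VF par dfs).

Let par_acyclic : forall x y, prel par x y -> ~~ anc x y.
Proof. by case: forestF. Qed.

Lemma parent_VF x y : par x = Some y -> x \in VF /\ y \in VF.
Proof.
case: forestF => noVF /(_ x y)-parVF _ xy; split; last by case: (parVF xy).
by apply: contraT => /noVF; rewrite xy.
Qed.

Lemma anc_VF a x : anc a x -> x \in VF -> a \in VF.
Proof.
case: (eqVneq a x) => [-> // | anx ax _].
by have [y /parent_VF[] _] := @sanc_child _ par a x (introT andP (conj ax anx)).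
Qed.

Lemma sanc_VF x t : sanc par x t -> x \in VF /\ t \in VF.
Proof.
by case/sanc_parent=> y /parent_VF[tVF yVF] xy; split=> //; apply: anc_VF xy yVF.
Qed.

Lemma same_tree_anc r a b : anc r a -> anc r b -> same_tree par a b.
Proof. by move=> ra rb; apply/existsP; exists r; rewrite ra rb. Qed.

Lemma dfs_anc a b : anc a b -> b \in VF -> dfs a <= dfs b.
Proof.
move=> ab bVF; have aVF := anc_VF ab bVF.
have [_] := dfsF aVF bVF (same_tree_anc (anc_refl par a) ab).
by rewrite ab => /esym/andP[].
Qed.

Lemma dfs_inj r a b : anc r a -> anc r b -> a \in VF -> b \in VF -> dfs a = dfs b -> a = b.
Proof. by move=> ra rb aVF bVF; apply: (dfsF aVF bVF (same_tree_anc ra rb)).1. Qed.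

Lemma dfs_parent x y : par x = Some y -> dfs y < dfs x.
Proof.
move=> xy; have [xVF yVF] := parent_VF xy; have yx := anc_parent xy.
rewrite ltn_neqAle dfs_anc // andbT; apply: contra_neq (parent_neq par_acyclic xy).
exact: dfs_inj (anc_refl par y) yx yVF xVF.
Qed.

Lemma prec_asym a b : prec a b -> ~~ prec b a.
Proof.
case/andP=> /and4P[aVF bVF /existsP[r /andP[ra rb]] ba] anb.
apply/negP=> /andP[/and4P[_ _ _ ab] _]; move/eqP: anb; apply.
by apply: (dfs_inj ra rb aVF bVF); apply/eqP; rewrite eqn_leq ab ba.
Qed.

Lemma prec_common_anc x t v : anc x t -> anc x v -> t \in VF -> v \in VF ->
  dfs v <= dfs t -> t != v -> prec t v.
Proof.
by move=> xt xv tVF vVF vt tnv; rewrite /prec /preceq tVF vVF vt (same_tree_anc xt xv).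
Qed.

Lemma matched_pairs_disjoint t1 v1 t2 v2 : prec t1 v1 -> prec t2 v2 ->
  [set t1; v1] \in M -> [set t2; v2] \in M -> t1 != t2 ->
  [disjoint [set t1; v1] & [set t2; v2]].
Proof.
have mate a b : prec a b -> b != a by case/andP=> _; rewrite eq_sym.
have cross a b a' b' : prec a b -> prec a' b' ->
    [set a; b] \in M -> [set a'; b'] \in M -> a != b'.
  move=> ab a'b' abM a'b'M; apply/eqP=> eab'; rewrite -eab' setUC in a'b'M a'b'.
  move: (matching_mate_uniq matchingM abM a'b'M (mate _ _ ab)) => eba'.
  by rewrite eba' in ab; move: (prec_asym ab); rewrite a'b'.
move=> p1 p2 M1 M2 t12; rewrite -setI_eq0; apply/eqP/setP=> z; rewrite !inE.
apply/negP=> /andP[/orP[] /eqP -> /orP[] /eqP].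
- by apply/eqP.
- exact/eqP/(cross _ _ _ _ p1 p2 M1 M2).
- by apply/eqP; rewrite eq_sym (cross _ _ _ _ p2 p1 M2 M1).
move=> ev; rewrite setUC in M1; rewrite -ev setUC in M2.
by move/eqP: t12; apply; apply: (matching_mate_uniq matchingM M1 M2); rewrite eq_sym mate.
Qed.

End DepthFirst.

Section Pairing.
Variables (T : finType) (adj : rel T) (M : {set {set T}}) (c : {set T} -> nat)
  (VF : {set T}) (par : T -> option T) (dfs : T -> nat).
Hypothesis matchingM : perfect_matching adj M.
Hypothesis colouring : edge_2_colouring adj c.
Hypothesis forestF : rooted_forest adj M VF par.
Hypothesis dfsF : dfs_indexing VF par dfs.
Hypothesis ends_mcl : forall x, x \in forest_roots VF par :|: forest_leaves VF par ->
  forall y, fadj par x y -> c [set x; y] = mcl M c x.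

Local Notation anc := (anc par).
Local Notation sanc := (sanc par).
Local Notation chain := (chain par).
Local Notation pcol := (pcol par c).
Local Notation mc := (mcl M c).
Local Notation seen := (seen adj c).

Let par_acyclic : forall x y, prel par x y -> ~~ anc x y.
Proof. by case: forestF. Qed.

Local Notation parent_neq := (parent_neq par_acyclic).
Local Notation sanc_trans := (sanc_trans par_acyclic).
Local Notation chain_id := (chain_id par_acyclic).
Local Notation chain_parent := (chain_parent par_acyclic).
Local Notation chain_cat := (chain_cat par_acyclic).
Local Notation chain_inner_sub := (chain_inner_sub par_acyclic).
Local Notation sanc_VF := (sanc_VF forestF).
Local Notation dfs_anc := (dfs_anc forestF dfsF).
Local Notation dfs_inj := (dfs_inj dfsF).
Local Notation dfs_parent := (dfs_parent forestF dfsF).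
Local Notation lca_path_colour := (lca_path_colour par_acyclic).
Local Notation lca_path_internal := (lca_path_internal par_acyclic).
Local Notation seen_eq_off_mcl := (seen_eq_off_mcl matchingM colouring).

Definition starts := [set t in VF | (par t != None) && (pcol t == mc t)].

Definition candidate x k t := [&& sanc x t, mc t == k,
  [forall w in chain x t, pcol w == k] & [forall w in chain x t :\ t, mc w != k]].

Definition least x k t :=
  candidate x k t && [forall t', candidate x k t' ==> (dfs t <= dfs t')].

Definition climbs t x :=
  candidate x (mc t) t && [forall w in chain x t :\ t, least w (mc t) t].

Definition passes t x := [&& mc x != mc t, par x != None, pcol x == mc t & least x (mc t) t].

(* A start climbs to its parent, the default of this arg min. *)
Definition summit t := [arg min_(x < odflt t (par t) | climbs t x) dfs x].

Definition blocked t := (mc (summit t) != mc t) && least (summit t) (mc t) t.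

Definition partner t :=
  if mc (summit t) == mc t then summit t
  else [arg min_(m < t | candidate (summit t) (mc t) m) dfs m].

Definition paired := starts :\: [set t | blocked t].

Definition owns s z := [/\ mc z != mc s, least z (mc s) s & seen z (mc s)].

Definition good_pair t v := [/\ prec VF par dfs t v, mc t = mc v,
  forall p, forest_path par t v p -> monochromatic_path c (mc t) t p &
  forall p z, forest_path par t v p -> internal v p z -> exists2 s, s \in [set t; v] & owns s z].

Lemma candidateP x k t : reflect
  [/\ sanc x t, mc t = k, {in chain x t, forall w, pcol w = k} &
      {in chain x t :\ t, forall w, mc w != k}]
  (candidate x k t).
Proof.
apply: (iffP and4P) => [[xt /eqP tk /forall_inP colk /forall_inP mck] | [xt tk colk mck]].
  by split=> // w /colk /eqP.
by split; rewrite ?tk //; apply/forall_inP => w; [move/colk ->| move/mck].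
Qed.

Lemma leastP x k t : reflect
  (candidate x k t /\ forall t', candidate x k t' -> dfs t <= dfs t') (least x k t).
Proof.
apply: (iffP andP) => -[xkt min]; split=> //.
  by move=> t'; move/forallP: min => /(_ t')/implyP.
by apply/forallP=> t'; apply/implyP/min.
Qed.

Lemma seen_pcol y x : par y = Some x -> seen x (pcol y) /\ seen y (pcol y).
Proof.
case: forestF => _ /(_ y x)-parF _ yx; have [_ adjyx _] := parF yx.
by rewrite /pcol yx; have [] := seen_edge c adjyx.
Qed.

Lemma candidate_child x k t : candidate x k t -> exists2 y, par y = Some x & pcol y = k.
Proof.
case/candidateP=> xt _ colk _; have [y yx yt] := sanc_child xt.
by exists y; rewrite // colk // inE yt andbT /sanc anc_parent // parent_neq.
Qed.

Lemma candidate_seen x k t : candidate x k t -> seen x k.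
Proof. by case/candidate_child=> y yx <-; apply: (seen_pcol yx).1. Qed.

Lemma candidate_chain x k t w : candidate x k t -> w \in chain x t :\ t -> candidate w k t.
Proof.
case/candidateP=> xt tk colk mck wt; have [wnt xwt] := setD1P wt.
have sub : chain w t \subset chain x t by rewrite (chain_cat xwt) subsetUr.
apply/candidateP; split=> // [|u /(subsetP sub)/colk // | u].
  by move: xwt; rewrite inE /sanc eq_sym wnt andbT => /andP[].
by rewrite in_setD1 => /andP[unt wut]; apply: mck; rewrite in_setD1 unt (subsetP sub).
Qed.

Lemma candidate_lift x k m w t : candidate x k m -> w \in chain x m :\ m ->
  candidate w k t -> candidate x k t.
Proof.
case/candidateP=> _ _ colm mcm wm /candidateP[wt tk colt mct].
have sub := chain_inner_sub wm.
have xw : sanc x w by move: wm; rewrite !inE => /andP[_ /andP[]].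
have xwt : w \in chain x t by rewrite inE xw (andP wt).1.
apply/candidateP; split=> // [|u | u]; first exact: sanc_trans xw wt.
  by rewrite (chain_cat xwt) => /setUP[/(subsetP sub)/setD1P[_ /colm] | /colt].
rewrite in_setD1 (chain_cat xwt) => /andP[unt /setUP[/(subsetP sub)/mcm // | uwt]].
by apply: mct; rewrite in_setD1 unt.
Qed.

Lemma least_uniq x k a b : least x k a -> least x k b -> a = b.
Proof.
move=> /leastP[/[dup] xka /candidateP[xa _ _ _] mina].
move=> /leastP[/[dup] xkb /candidateP[xb _ _ _] minb].
have [[_ aVF] [_ bVF]] := (sanc_VF xa, sanc_VF xb).
apply: dfs_inj (andP xa).1 (andP xb).1 aVF bVF _.
by apply/eqP; rewrite eqn_leq mina ?minb.
Qed.

Lemma least_chain x k m w : least x k m -> w \in chain x m :\ m -> least w k m.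
Proof.
case/leastP=> xkm min wm; apply/leastP; split; first exact: candidate_chain wm.
by move=> t /(candidate_lift xkm wm); apply: min.
Qed.

Lemma least_climbs x k m : least x k m -> climbs m x.
Proof.
move=> /[dup] xkm /leastP[/[dup] cand /candidateP[_ mk _ _] _].
rewrite /climbs mk cand; apply/forall_inP=> w; exact: least_chain.
Qed.

Lemma climbs_parent t y : t \in starts -> par t = Some y -> climbs t y.
Proof.
rewrite inE => /and3P[_ _ /eqP tcol] ty.
have yt : sanc y t by rewrite /sanc anc_parent ?parent_neq.
have chainE : chain y t = [set t] by rewrite (chain_parent ty (anc_refl par t)) chain_id setU0.
apply/andP; split; last by apply/forall_inP=> w; rewrite chainE setDv inE.
by apply/candidateP; split=> // w; rewrite chainE ?setDv inE // => /eqP ->.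
Qed.

Lemma climbs_step t x y : climbs t x -> passes t x -> par x = Some y -> climbs t y.
Proof.
case/andP=> /candidateP[xt _ colt mct] /forall_inP leastt.
case/and4P=> xk _ /eqP xcol xleast xy.
have chainE : chain y t = x |: chain x t := chain_parent xy (andP xt).1.
have xnt : x != t by case/andP: xt.
apply/andP; split.
  apply/candidateP; split=> // [|w | w].
  - by apply: sanc_trans xt; rewrite /sanc anc_parent ?parent_neq.
  - by rewrite chainE => /setU1P[-> | /colt].
  rewrite in_setD1 chainE in_setU1 => /andP[wnt /orP[/eqP -> // | wxt]].
  by apply: mct; rewrite in_setD1 wnt.
apply/forall_inP=> w; rewrite in_setD1 chainE in_setU1.
by case/andP=> wnt /orP[/eqP -> // | wxt]; apply: leastt; rewrite in_setD1 wnt.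
Qed.

Lemma summit_spec t : t \in starts -> climbs t (summit t) /\ ~~ passes t (summit t).
Proof.
move=> /[dup] tS; rewrite inE => /and3P[_ /[dup] tpar]; case E: (par t) => [y|] // _ _.
have ty := climbs_parent tS E.
rewrite /summit E; case: arg_minnP => [//| x tx min]; split=> //.
apply/negP=> /[dup] tpx /and4P[_]; case E': (par x) => [x'|] // _ _ _.
by have := min x' (climbs_step tx tpx E'); rewrite leqNgt dfs_parent.
Qed.

Lemma climbs_passes t x w : climbs t x -> w \in chain x t :\ t -> passes t w.
Proof.
case/andP=> /candidateP[_ _ colt mct] /forall_inP leastt wt.
have [_ xwt] := setD1P wt; move: (xwt); rewrite inE => /andP[/sanc_parent[y wy _] _].
by rewrite /passes wy mct // colt // eqxx leastt.
Qed.

Lemma passes_owns t z : passes t z -> owns t z.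
Proof.
case/and4P=> zk; case E: (par z) => [y|] // _ /eqP zcol zleast.
by split=> //; rewrite -zcol; apply: (seen_pcol E).2.
Qed.

(* z sees at most two colours, one of which is mcl z. *)
Lemma owns_inj s s' z : owns s z -> owns s' z -> s = s'.
Proof.
case=> zs zleast zseen [zs' zleast' zseen'].
have ss' : mc s = mc s' by apply: (seen_eq_off_mcl zseen zseen'); rewrite eq_sym.
by rewrite -ss' in zleast'; apply: least_uniq zleast zleast'.
Qed.

Lemma climbs_disjoint t m x : climbs t x -> climbs m x -> mc t = mc m -> t != m ->
  [disjoint chain x t & chain x m].
Proof.
case/andP=> /candidateP[_ _ _ mct] /forall_inP leastt.
case/andP=> /candidateP[_ _ _ mcm] /forall_inP leastm tm tnm.
apply/pred0P=> w /=; apply/negP=> /andP[wt wm].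
case: (eqVneq w t) => [ewt | wnt].
  by move: (mcm w); rewrite in_setD1 wm ewt tnm tm eqxx => /(_ isT).
case: (eqVneq w m) => [ewm | wnm].
  by move: (mct w); rewrite in_setD1 wt ewm eq_sym tnm tm eqxx => /(_ isT).
have lt := leastt w; have lm := leastm w; rewrite !in_setD1 wnt wnm wt wm tm in lt lm.
by move/eqP: tnm; apply; apply: least_uniq (lt isT) (lm isT).
Qed.

Lemma blocked_summit t : t \in starts -> blocked t ->
  summit t \in starts :\: forest_leaves VF par /\ owns t (summit t).
Proof.
move=> tS /andP[xk xleast]; have [/andP[tx _] npass] := summit_spec tS.
have [y yx ycol] := candidate_child tx.
have [_ xVF] := parent_VF forestF yx.
have own : owns t (summit t) by split=> //; apply: candidate_seen tx.
split=> //; rewrite in_setD; apply/andP; split.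
  by apply/negP; rewrite inE => /and3P[_ _ /forallP/(_ y)]; rewrite yx eqxx.
rewrite inE xVF.
case E: (par (summit t)) => [x'|] /=; last first.
  have root : summit t \in forest_roots VF par :|: forest_leaves VF par by rewrite !inE xVF E.
  have := ends_mcl root (y := y); rewrite /fadj /prel yx eqxx orbT setUC => /(_ isT).
  by rewrite /pcol yx in ycol; rewrite ycol => yxcol; rewrite yxcol eqxx in xk.
apply/eqP; apply: contraNeq npass => xcol.
rewrite /passes xk E xleast andbT /=.
by rewrite (seen_eq_off_mcl (seen_pcol E).2 (candidate_seen tx) xcol) ?eqxx // eq_sym.
Qed.

Lemma leaves_starts : forest_leaves VF par \subset starts.
Proof.
apply/subsetP=> x /[dup] xL; rewrite !inE => /and3P[xVF]; case E: (par x) => [y|] // _ _.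
have xy : fadj par x y by rewrite /fadj /prel E eqxx.
by rewrite xVF /pcol E -(ends_mcl _ xy) ?eqxx // inE xL orbT.
Qed.

Lemma card_leaves_paired : #|forest_leaves VF par| <= #|paired|.
Proof.
set B := starts :&: [set t | blocked t].
have summit_inj : {in B &, injective summit}.
  move=> t1 t2 /setIP[S1]; rewrite inE => /(blocked_summit S1)[_ own1].
  move=> /setIP[S2]; rewrite inE => /(blocked_summit S2)[_ own2] e.
  by rewrite e in own1; apply: owns_inj own1 own2.
have summitB : summit @: B \subset starts :\: forest_leaves VF par.
  apply/subsetP=> z /imsetP[t /setIP[tS]]; rewrite inE => tB ->.
  by case: (blocked_summit tS tB).
have := subset_leq_card summitB; rewrite card_in_imset // cardsDS ?leaves_starts //.
have := subset_leq_card leaves_starts; rewrite /paired cardsD -/B.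
by lia.
Qed.

Lemma good_pair_climbs t v x : climbs t x -> v = x \/ climbs v x /\ owns v x ->
  mc v = mc t -> dfs v <= dfs t -> t != v -> good_pair t v.
Proof.
move=> /[dup] tx /andP[/candidateP[xt _ colt _] _] hv vt dvt tnv.
have [xVF tVF] := sanc_VF xt.
have [xv dis colv passv ownx] : [/\ anc x v, [disjoint chain x t & chain x v],
    {in chain x v, forall w, pcol w = mc t}, {in chain x v :\ v, forall w, passes v w}
    & v != x -> owns v x].
  case: hv => [-> | [/[dup] vx /andP[/candidateP[xv' _ colv' _] _] own]].
    by split=> [||w|w|]; rewrite ?anc_refl ?chain_id -?setI_eq0 ?setI0 ?inE ?eqxx ?andbF.
  rewrite -vt; split=> //; first by case/andP: xv'.
    by apply: climbs_disjoint tx vx _ tnv.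
  by move=> w; apply: climbs_passes.
have vVF : v \in VF.
  case: (eqVneq v x) => [-> // | vnx]; suff /sanc_VF[] : sanc x v by [].
  by rewrite /sanc xv eq_sym vnx.
split=> //; first by apply: prec_common_anc (andP xt).1 xv tVF vVF dvt tnv.
  by move=> p tvp; apply: lca_path_colour tvp (andP xt).1 xv dis _ => w /setUP[/colt | /colv].
move=> p z tvp /[dup] /andP[_ znv] zp.
case: (lca_path_internal tvp (andP xt).1 xv dis zp).
- by move=> zx; exists v; rewrite ?set22 // zx; apply: ownx; rewrite -zx eq_sym.
- by move=> /(climbs_passes tx)/passes_owns; exists t; rewrite ?set21.
by move=> /passv/passes_owns; exists v; rewrite ?set22.
Qed.

Lemma partner_good t : t \in paired -> good_pair t (partner t).
Proof.
case/setDP=> tS; rewrite inE => nblocked; have [tx _] := summit_spec tS.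
have [/candidateP[xt _ _ _] _] := andP tx; have [_ tVF] := sanc_VF xt.
rewrite /partner; case: ifP => [/eqP xk | /negbT xk].
  apply: good_pair_climbs tx (or_introl erefl) xk (dfs_anc (andP xt).1 tVF) _.
  by rewrite eq_sym; case/andP: xt.
case: arg_minnP => [|m xkm min]; first by case/andP: tx.
have mleast : least (summit t) (mc t) m by apply/leastP.
have /candidateP[_ mk _ _] := xkm.
have tnm : t != m.
  by apply: contraNneq nblocked => em; rewrite -em in mleast; rewrite /blocked xk mleast.
have own : owns m (summit t) by rewrite /owns mk; split=> //; apply: candidate_seen xkm.
apply: good_pair_climbs tx _ mk (min t (andP tx).1) tnm.
by right; split=> //; apply: least_climbs mleast.
Qed.

End Pairing.

Theorem lemma3 (T : finType) (adj : rel T) (M : {set {set T}})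
  (c : {set T} -> nat) (VF : {set T}) (par : T -> option T) (dfs : T -> nat) :
  simple_graph adj ->
  perfect_matching adj M ->
  optimal_2_colouring adj c ->
  rooted_forest adj M VF par ->
  dfs_indexing VF par dfs ->
  (forall x, x \in (forest_roots VF par :|: forest_leaves VF par) ->
     forall y, fadj par x y -> c [set x; y] = mcl M c x) ->
  exists u v : 'I_#|forest_leaves VF par| -> T,
    (injective u) /\
    [/\ forall i, prec VF par dfs (u i) (v i),
        forall i, mcl M c (u i) = mcl M c (v i),
        forall i p, forest_path par (u i) (v i) p -> monochromatic_path c (mcl M c (u i)) (u i) p,
        forall i p z, forest_path par (u i) (v i) p -> internal (v i) p z ->
          mcl M c z != mcl M c (u i) &
        forall i j, i != j -> [set u i; v i] \in M -> [set u j; v j] \in M ->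
          forall p q, forest_path par (u i) (v i) p -> forest_path par (u j) (v j) q ->
          forall z, internal (v i) p z -> ~~ internal (v j) q z].
Proof.
move=> _ matchingM [colouring _] forestF dfsF ends_mcl.
have le := card_leaves_paired matchingM colouring forestF dfsF ends_mcl.
pose u i := enum_val (widen_ord le i).
have good i := partner_good forestF dfsF (enum_valP (widen_ord le i)).
exists u, (fun i => partner M c par dfs (u i)); split.
  by move=> i j /enum_val_inj [] /val_inj.
split=> [i | i | i | i p z | i j ij Mi Mj p q ip jq z zi].
1-3: by case: (good i).
- move=> tp zi; have [_ vk _ own] := good i; have [s] := own p z tp zi.
  by rewrite !inE => /orP[] /eqP -> []; rewrite ?vk.
have [pi _ _ owni] := good i; have [pj _ _ ownj] := good j.
have uij : u i != u j by apply: contra ij => /eqP/enum_val_inj [] /val_inj ->.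
have dis := matched_pairs_disjoint matchingM dfsF pi pj Mi Mj uij.
apply/negP=> zj; have [s si own_si] := owni p z ip zi; have [s' sj own_sj] := ownj q z jq zj.
have ss' := owns_inj matchingM colouring forestF dfsF own_si own_sj.
by rewrite -ss' (disjointFr dis si) in sj.
Qed.
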